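(* Let $\mathcal{G}=(\mathcal{N}_0,\mathcal{E})$ be a tree (radial distribution network) with node set $\mathcal{N}_0=\{0,1,\dots,n\}$, where node $0$ is the substation, and let $\mathcal{N}=\mathcal{N}_0\setminus\{0\}$. Each line $(h,k)\in\mathcal{E}$ has reactance $x_{hk}>0$. Define the $n\times n$ matrix $X$ by $X_{ij}=2\sum_{(h,k)\in P_i\cap P_j} x_{hk}$ for $i,j\in\mathcal{N}$, where $P_i$ is the set of lines on the unique path from node $0$ to node $i$. For each $i\in\mathcal{N}$ let $\underline{v}_i\le \bar{v}_i$ be given bounds, and let $g_i:\mathbb{R}\to\mathbb{R}$ be a decentralized control policy. Consider the closed-loop voltage dynamics $$\mathbf{v}(t)=X\mathbf{q}(t)+\mathbf{v}^{env},\qquad \dot{q}_i(t)=u_i(t)=g_i(v_i(t)),\quad i\in\mathcal{N},$$ where $\mathbf{v}^{env}\in\mathbb{R}^n$ is a constant vector, $\mathbf{q}(t)\in\mathbb{R}^n$ is the reactive power injection and $\mathbf{v}(t)\in\mathbb{R}^n$ the voltage magnitude vector. Suppose that for every $i\in\mathcal{N}$, $g_i$ is continuously differentiable, satisfies $g_i(v_i)=0$ for $v_i\in[\underline{v}_i,\bar{v}_i]$, is strictly monotonically decreasing on $(-\infty,\underline{v}_i]$ and on $[\bar{v}_i,\infty)$, and satisfies $\lim_{v_i\to\infty}|g_i(v_i)|=\infty$. Then the closed-loop system is voltage stable: for any $\mathbf{v}^{env}\in\mathbb{R}^n$ and any initial condition $\mathbf{v}(0)\in\mathbb{R}^n$,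 the trajectory satisfies $\lim_{t\to\infty}\mathrm{dist}(\mathbf{v}(t),S_v)=0$, where $S_v=\{\mathbf{v}\in\mathbb{R}^n:\underline{v}_i\le v_i\le \bar{v}_i \text{ for all } i\}$ and $\mathrm{dist}(\mathbf{v},S_v)=\min_{\mathbf{v}'\in S_v}\|\mathbf{v}-\mathbf{v}'\|$.
   Context: This is the linearized (Simplified DistFlow) model of a radial power distribution network: the voltage vector equals $X\mathbf{q}+\mathbf{v}^{env}$, where $\mathbf{v}^{env}$ collects the uncontrollable contributions (from active power injections and substation voltage), and each node's controller sets the rate of change of its reactive power injection as a function of its own local voltage only. In the paper the policies $g_i$ are parameterized as $g_{i,\theta_i}$ with parameters $\theta_i$; the parameterization plays no role in the statement. *)

From HB Require Import structures.
From mathcomp Require Import all_boot all_order all_algebra.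
From mathcomp Require Import all_classical all_reals all_analysis.
Set Implicit Arguments. Unset Strict Implicit. Unset Printing Implicit Defensive.
Import Order.TTheory GRing.Theory Num.Theory.
Import numFieldNormedType.Exports.
Local Open Scope ring_scope.
Local Open Scope classical_set_scope.

(* A tree on nodes {0,...,n} (type 'I_n.+1), rooted at the substation 0,
   given by a parent map: the lines are (par k, k) for k <> 0. *)
Definition is_rooted_tree (n : nat) (par : 'I_n.+1 -> 'I_n.+1) : Prop :=
  par ord0 = ord0 /\ forall i : 'I_n.+1, exists k : nat, iter k par i = ord0.

(* Node j <> 0 lies on the path from 0 to i, i.e. the line (par j, j)
   belongs to P_i.  (Ancestors are reached in at most n steps.) *)
Definition on_path (n : nat) (par : 'I_n.+1 -> 'I_n.+1) (i j : 'I_n.+1) : bool :=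
  (j != ord0) && [exists k : 'I_n.+1, iter k par i == j].

(* Non-substation node number i+1, for i : 'I_n. *)
Definition node (n : nat) (i : 'I_n) : 'I_n.+1 := lift ord0 i.

(* X_ij = 2 * sum of reactances of lines in P_i ∩ P_j;
   x k is the reactance of line (par k, k). *)
Definition Xmat (R : realType) (n : nat) (par : 'I_n.+1 -> 'I_n.+1)
    (x : 'I_n.+1 -> R) : 'M[R]_n :=
  \matrix_(i < n, j < n)
    (2 * \sum_(k < n.+1 | on_path par (node i) k && on_path par (node j) k) x k).

Definition enorm (R : realType) (n : nat) (v : 'cV[R]_n) : R :=
  Num.sqrt (\sum_(i < n) v i 0 ^+ 2).

Definition Sv (R : realType) (n : nat) (vlo vhi : 'I_n -> R) : set 'cV[R]_n :=
  [set v | forall i, vlo i <= v i 0 <= vhi i].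

Definition dist_set (R : realType) (n : nat) (v : 'cV[R]_n) (S : set 'cV[R]_n) : R :=
  inf [set enorm (v - w) | w in S].

From HB Require Import structures.
From mathcomp Require Import all_boot all_order all_algebra.
From mathcomp Require Import all_classical all_reals all_analysis.
From mathcomp Require Import ring lra zify.
Set Implicit Arguments. Unset Strict Implicit. Unset Printing Implicit Defensive.
Import Order.TTheory GRing.Theory Num.Theory.
Import numFieldNormedType.Exports.
Local Open Scope ring_scope.
Local Open Scope classical_set_scope.

(* X = A^T diag(2 x) A, where A is the incidence matrix between lines and
   root-to-node paths of the tree; A is injective, so X is symmetric positive
   definite and some q* satisfies X q* + v^env = v_lo.  Along the
   closed loop, V = (q - q* )^T X (q - q* ) has derivative
   2 sum_i g_i(v_i) (v_i - v_lo_i) <= 0, every term being nonpositive thanks to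
   the dead zone of g_i.  So V is bounded, hence so are v (by
   (v_i - v_lo_i)^2 <= X_ii V), g(v) and dv/dt = X g(v).  If v_i were eps
   outside its band at a late time t, the Lipschitz bound keeps it eps/2
   outside on [t, t + tau], where V then drops by a fixed amount; as V is
   bounded below this cannot happen arbitrarily late, and eventually
   dist(v, S_v) <= sqrt n * eps. *)

Section DeadZonePolicy.
Variables (R : realDomainType) (lo hi : R) (f : R -> R).
Hypothesis lo_le_hi : lo <= hi.
Hypothesis f_band : forall v, lo <= v <= hi -> f v = 0.
Hypothesis f_decr_lo : forall a b, a < b -> b <= lo -> f b < f a.
Hypothesis f_decr_hi : forall a b, hi <= a -> a < b -> f b < f a.

Lemma policy_lo : f lo = 0. Proof. by rewrite f_band ?lexx. Qed.
Lemma policy_hi : f hi = 0. Proof. by rewrite f_band ?lexx ?andbT. Qed.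

Lemma policy_gt0 v : v < lo -> 0 < f v.
Proof. by move=> vlo; rewrite -policy_lo f_decr_lo. Qed.

Lemma policy_lt0 v : hi < v -> f v < 0.
Proof. by move=> vhi; rewrite -policy_hi f_decr_hi. Qed.

Lemma policy_ge0 v : v <= hi -> 0 <= f v.
Proof.
move=> vhi; have [/policy_gt0/ltW //|lov] := ltP v lo.
by rewrite f_band ?lov.
Qed.

Lemma policy_le0 v : lo <= v -> f v <= 0.
Proof.
move=> lov; have [/policy_lt0/ltW //|vhi] := ltP hi v.
by rewrite f_band ?lov.
Qed.

Lemma policy_nonincr a b : a <= b -> f b <= f a.
Proof.
rewrite le_eqVlt => /predU1P[-> //|ab].
have [blo|lob] := leP b lo; first exact/ltW/f_decr_lo.
have [hia|ahi] := leP hi a; first exact/ltW/f_decr_hi.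
exact: le_trans (policy_le0 (ltW lob)) (policy_ge0 (ltW ahi)).
Qed.

Lemma policy_mul_le0 v : f v * (v - lo) <= 0.
Proof.
have [vlo|lov] := ltP v lo.
  by rewrite pmulr_rle0 ?policy_gt0 // subr_le0 ltW.
by rewrite mulr_le0_ge0 ?policy_le0 ?subr_ge0.
Qed.

Lemma policy_norm_le a b v : a <= v <= b -> `|f v| <= `|f a| + `|f b|.
Proof.
case/andP=> /policy_nonincr fva /policy_nonincr fbv.
have := ler_norm (f a); have := ler_norm (- f b); rewrite normrN.
have := normr_ge0 (f a); have := normr_ge0 (f b).
by rewrite ler_norml => *; apply/andP; split; lra.
Qed.

End DeadZonePolicy.

Definition qform (R : comPzRingType) n (M : 'M[R]_n) (w : 'cV[R]_n) : R :=
  (w^T *m M *m w) 0 0.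

Lemma dot_colE (R : pzRingType) n (u w : 'cV[R]_n) :
  (u^T *m w) 0 0 = \sum_i u i 0 * w i 0.
Proof. by rewrite mxE; apply: eq_bigr => i _; rewrite mxE. Qed.

Lemma bilinear_sym (R : comPzRingType) n (M : 'M[R]_n) (u w : 'cV[R]_n) :
  M^T = M -> u^T *m M *m w = w^T *m M *m u.
Proof.
move=> Msym; apply/matrixP => i j; rewrite !ord1.
have -> : u^T *m M *m w = (w^T *m M *m u)^T.
  by rewrite !trmx_mul trmxK Msym mulmxA.
by rewrite mxE.
Qed.

Lemma qform_mulmx (R : comPzRingType) m n (B : 'M[R]_(m, n)) M w :
  qform (B^T *m M *m B) w = qform M (B *m w).
Proof. by rewrite /qform trmx_mul !mulmxA. Qed.

Lemma qform_diag (R : comPzRingType) n (d : 'rV[R]_n) w :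
  qform (diag_mx d) w = \sum_i d 0 i * w i 0 ^+ 2.
Proof.
rewrite /qform mul_mx_diag mxE; apply: eq_bigr => i _.
by rewrite !mxE expr2; ring.
Qed.

Lemma qform_delta (R : comPzRingType) n (M : 'M[R]_n) j :
  qform M (delta_mx j 0) = M j j.
Proof. by rewrite /qform trmx_delta -rowE -colE !mxE. Qed.

Lemma tr_delta_mulmx (R : comPzRingType) n (M : 'M[R]_n) (u : 'cV[R]_n) j :
  ((delta_mx j 0 : 'cV[R]_n)^T *m M *m u) 0 0 = (M *m u) j 0.
Proof. by rewrite trmx_delta -mulmxA -rowE mxE. Qed.

Lemma quadratic_ge0_discr (R : realFieldType) (A B D : R) :
  0 <= D -> (forall s, 0 <= A - 2 * s * B + s ^+ 2 * D) -> B ^+ 2 <= A * D.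
Proof.
rewrite le_eqVlt => /predU1P[<- ge0|D0].
  suff -> : B = 0 by rewrite expr0n mulr0.
  apply/eqP; apply: contraT => B0; have := ge0 ((A + 1) / (2 * B)).
  have -> : A - 2 * ((A + 1) / (2 * B)) * B + ((A + 1) / (2 * B)) ^+ 2 * 0 = -1.
    by field; rewrite B0.
  by rewrite ler0N1.
move=> /(_ (B / D)).
have -> : A - 2 * (B / D) * B + (B / D) ^+ 2 * D = (A * D - B ^+ 2) / D.
  by field; rewrite gt_eqF.
by rewrite pmulr_lge0 ?invr_gt0 // subr_ge0.
Qed.

Lemma qform_subZ (R : comPzRingType) n (M : 'M[R]_n) (w u : 'cV[R]_n) s :
  M^T = M ->
  qform M (w - s *: u) = qform M w - 2 * s * (u^T *m M *m w) 0 0 + s ^+ 2 * qform M u.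
Proof.
move=> Msym; rewrite /qform.
have -> : (w - s *: u)^T = w^T - s *: u^T by rewrite linearB linearZ.
rewrite !(mulmxBl, mulmxBr) -!scalemxAl -!scalemxAr (bilinear_sym w u Msym).
move: (w^T *m M *m w) (u^T *m M *m w) (u^T *m M *m u) => ww uw uu.
by rewrite !mxE; ring.
Qed.

Lemma psd_mulmx_sqr_le (R : realFieldType) n (M : 'M[R]_n) (w : 'cV[R]_n) j :
  M^T = M -> (forall u, 0 <= qform M u) ->
  (M *m w) j 0 ^+ 2 <= qform M w * M j j.
Proof.
move=> Msym Mpsd; apply: quadratic_ge0_discr; first by rewrite -qform_delta.
move=> s; have := Mpsd (w - s *: delta_mx j 0).
by rewrite qform_subZ // tr_delta_mulmx qform_delta.
Qed.

Lemma pd_qform_ge0 (R : realFieldType) n (M : 'M[R]_n) :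
  (forall w, w != 0 -> 0 < qform M w) -> forall w, 0 <= qform M w.
Proof.
move=> Mpos w; have [->|/Mpos/ltW //] := eqVneq w 0.
by rewrite /qform mulmx0 mxE.
Qed.

Lemma pd_unitmx (R : realFieldType) n (M : 'M[R]_n) :
  (forall w, w != 0 -> 0 < qform M w) -> M \in unitmx.
Proof.
move=> Mpos; rewrite -unitmx_tr -row_free_unit; apply: inj_row_free => v vM0.
have Mv0 : M *m v^T = 0 by apply: trmx_inj; rewrite trmx_mul trmxK vM0 trmx0.
apply/trmx_inj; rewrite trmx0; apply/eqP; apply: contraT => /Mpos.
by rewrite /qform -mulmxA Mv0 mulmx0 mxE ltxx.
Qed.

Definition path_mx (R : pzSemiRingType) n (par : 'I_n.+1 -> 'I_n.+1) :
  'M[R]_(n.+1, n) := \matrix_(k, i) (on_path par (node i) k)%:R.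
Arguments path_mx {R n}.

Lemma path_mx_row0 (R : pzSemiRingType) n par (w : 'cV[R]_n) :
  (path_mx par *m w) ord0 0 = 0.
Proof.
by rewrite mxE big1 // => i _; rewrite mxE /on_path eqxx mul0r.
Qed.

Lemma Xmat_factor (R : realType) n par (x : 'I_n.+1 -> R) :
  Xmat par x = (path_mx par)^T *m diag_mx (\row_k (2 * x k)) *m path_mx par.
Proof.
apply/matrixP => i j; rewrite mul_mx_diag !mxE big_mkcond mulr_sumr.
apply: eq_bigr => k _; rewrite !mxE.
by case: (on_path _ _ k); case: (on_path _ _ k); rewrite /= ?mul1r ?mulr1 ?mul0r ?mulr0.
Qed.

Lemma Xmat_sym (R : realType) n par (x : 'I_n.+1 -> R) :
  (Xmat par x)^T = Xmat par x.
Proof. by rewrite Xmat_factor !trmx_mul trmxK tr_diag_mx mulmxA. Qed.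

Lemma qform_Xmat (R : realType) n par (x : 'I_n.+1 -> R) w :
  qform (Xmat par x) w = \sum_k 2 * x k * (path_mx par *m w) k 0 ^+ 2.
Proof.
by rewrite Xmat_factor qform_mulmx qform_diag; apply: eq_bigr => k _; rewrite mxE.
Qed.

Section RootedTree.
Variables (n : nat) (par : 'I_n.+1 -> 'I_n.+1).
Hypothesis par_tree : is_rooted_tree par.

Lemma iter_par_root k : iter k par ord0 = ord0.
Proof. by elim: k => //= k ->; exact: par_tree.1. Qed.

Lemma root_reachable m : exists k, iter k par m == ord0.
Proof. by have [k km] := par_tree.2 m; exists k; apply/eqP. Qed.

Definition depth m := ex_minn (root_reachable m).

Lemma iter_depth m : iter (depth m) par m = ord0.
Proof. by rewrite /depth; case: ex_minnP => k /eqP. Qed.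

Lemma depth_min m k : iter k par m = ord0 -> (depth m <= k)%N.
Proof. by rewrite /depth; case: ex_minnP => d _ dmin /eqP/dmin. Qed.

Lemma on_path_refl m : m != ord0 -> on_path par m m.
Proof. by move=> m0; rewrite /on_path m0; apply/existsP; exists ord0. Qed.

Lemma on_path_depth_lt m k : on_path par m k -> k != m -> (depth k < depth m)%N.
Proof.
case/andP => k0 /existsP[a /eqP ak] km.
have a_lt : (a < depth m)%N.
  rewrite ltnNge; apply: contra k0 => /subnK am.
  by rewrite -ak -am iterD iter_depth iter_par_root.
have a_gt0 : (0 < a)%N.
  by rewrite lt0n; apply: contraNneq km => a0; rewrite -ak a0.
have : (depth k <= depth m - a)%N.
  by apply: depth_min; rewrite -ak -iterD subnK ?iter_depth // ltnW.
lia.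
Qed.

Lemma path_mx_mul_eq0 (R : pzRingType) (w : 'cV[R]_n) :
  path_mx par *m w = 0 -> w = 0.
Proof.
move=> Aw0; apply/matrixP => i j; rewrite ord1 mxE {j}.
apply/eqP; apply: contraT => wi.
(* A deepest node carrying a nonzero value is the only one in its subtree, so
   the entry of path_mx par *m w on its line is that value. *)
have [i0 wi0 i0_max] :=
  @arg_maxnP _ i (fun j => w j 0 != 0) (fun j => depth (node j)) wi.
suff : (path_mx par *m w) (node i0) 0 = w i0 0.
  by rewrite Aw0 mxE => /esym/eqP; rewrite (negbTE wi0).
rewrite mxE (bigD1 i0) //= big1 ?addr0.
  by rewrite mxE on_path_refl ?mul1r // eq_sym neq_lift.
move=> j ji0; rewrite mxE; have [onp|] := boolP (on_path _ _ _); last by rewrite mul0r.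
have : node i0 != node j by rewrite (inj_eq (@lift_inj _ ord0)) eq_sym.
move=> /(on_path_depth_lt onp) lt_ij.
have [-> |wj] := eqVneq (w j 0) 0; first by rewrite mulr0.
by have := i0_max j wj; rewrite /= leqNgt lt_ij.
Qed.

End RootedTree.

Lemma Xmat_pos (R : realType) n par (x : 'I_n.+1 -> R) (w : 'cV[R]_n) :
  is_rooted_tree par -> (forall k, k != ord0 -> 0 < x k) ->
  w != 0 -> 0 < qform (Xmat par x) w.
Proof.
move=> par_tree x_pos w0; rewrite qform_Xmat.
have term_ge0 k : 0 <= 2 * x k * (path_mx par *m w) k 0 ^+ 2.
  have [->|k0] := eqVneq k ord0; first by rewrite path_mx_row0 expr0n mulr0.
  by rewrite mulr_ge0 ?sqr_ge0 // mulr_ge0 // ltW ?x_pos.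
have [k Awk] : exists k, (path_mx par *m w) k 0 != 0.
  apply/existsP; apply: contraNT w0 => /existsPn Aw0.
  apply/eqP/(path_mx_mul_eq0 par_tree)/matrixP => k j.
  by rewrite ord1 [RHS]mxE; apply/eqP/negPn/Aw0.
have k0 : k != ord0 by apply: contraNneq Awk => ->; rewrite path_mx_row0.
rewrite (bigD1 k) //= ltr_pwDl ?sumr_ge0 //.
apply: mulr_gt0; first by rewrite mulr_gt0 ?x_pos.
by rewrite lt_neqAle eq_sym sqrf_eq0 Awk sqr_ge0.
Qed.

Lemma is_derive_diff_le (R : realType) (f df : R -> R) (a b K : R) :
  a <= b -> (forall t, a <= t <= b -> is_derive t 1 f (df t)) ->
  (forall t, a < t < b -> df t <= K) -> f b - f a <= K * (b - a).
Proof.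
rewrite le_eqVlt => /predU1P[<- _ _|ab f_df df_le]; first by rewrite !subrr mulr0.
have f_df_in t : t \in `[a, b]%R -> is_derive t 1 f (df t).
  by rewrite in_itv => /f_df.
have f_derivable t : t \in `[a, b]%R -> derivable f t 1 by move=> /f_df_in [].
have [c] := MVT ab (fun t tab => f_df_in t (subset_itv_oo_cc tab))
  (derivable_within_continuous f_derivable).
rewrite in_itv /= => /df_le dfc ->.
by rewrite ler_wpM2r // subr_ge0 ltW.
Qed.

Lemma is_derive_norm_diff_le (R : realType) (f df : R -> R) (a b K : R) :
  a <= b -> (forall t, a <= t <= b -> is_derive t 1 f (df t)) ->
  (forall t, a < t < b -> `|df t| <= K) -> `|f b - f a| <= K * (b - a).
Proof.
move=> ab f_df df_le.
have df_le2 t : a < t < b -> df t <= K /\ - df t <= K.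
  by move/df_le; rewrite ler_norml lerNl => /andP[].
have up : f b - f a <= K * (b - a).
  by apply: is_derive_diff_le => // t /df_le2[].
have down : (- f) b - (- f) a <= K * (b - a).
  apply: (is_derive_diff_le (df := - df)) => // t; first by move/f_df/is_deriveN.
  by move/df_le2 => [].
by rewrite ler_norml; move: down; rewrite opprfctE; lra.
Qed.

Lemma is_derive_nonincr (R : realType) (f df : R -> R) (T s t : R) :
  (forall u, T <= u -> is_derive u 1 f (df u)) -> (forall u, T <= u -> df u <= 0) ->
  T <= s -> s <= t -> f t <= f s.
Proof.
move=> f_df df_le0 Ts st.
have Tle u : s <= u -> T <= u by exact: le_trans.
rewrite -subr_le0 -(mul0r (t - s)); apply: is_derive_diff_le => // u.
  by move=> /andP[su _]; apply/f_df/Tle.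
by move=> /andP[su _]; apply/df_le0/Tle/ltW.
Qed.

Lemma dissipation_eventually_gt (R : realType) (V dV y : R -> R) (T M b c e : R) :
  (forall t, T <= t -> is_derive t 1 V (dV t)) ->
  (forall t, T <= t -> 0 <= V t) ->
  (forall t, T <= t -> dV t <= 0) ->
  (forall t, T <= t -> y t <= b -> dV t <= - c) ->
  (forall s t, T <= s -> s <= t -> y t - y s <= M * (t - s)) ->
  0 <= M -> 0 < c -> 0 < e ->
  \forall t \near +oo, b - e < y t.
Proof.
move=> V_dV V_ge0 dV_le0 dV_le_c y_lip M_ge0 c_gt0 e_gt0.
pose tau := e / (M + 1).
have tau_gt0 : 0 < tau by rewrite divr_gt0 // ltr_wpDl.
have M_tau : M * tau <= e.
  by rewrite mulrCA ger_pMr // ler_pdivrMr ?mul1r ?lerDl // ltr_wpDl.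
pose E := V @` [set t | T <= t].
have E_lb : has_lbound E by exists 0 => _ [t Tt <-]; exact: V_ge0.
have E_inf : has_inf E by split=> //; exists (V T), T => /=.
have [_ [T' TT' <-] VT'] := inf_adherent (mulr_gt0 c_gt0 tau_gt0) E_inf.
(* If y t <= b - e at a time t >= T', then y <= b on [t, t + tau], where V
   loses c * tau and so falls below its infimum. *)
near=> t; rewrite ltNge; apply/negP => y_low.
have T't : T' <= t by near: t; apply: nbhs_pinfty_ge; exact: num_real.
have Tt : T <= t := le_trans TT' T't.
have Tle u : t <= u -> T <= u by exact: le_trans.
have t_tau : t <= t + tau by rewrite lerDl ltW.
have drop : V (t + tau) - V t <= - c * (t + tau - t).
  apply: is_derive_diff_le => [|u /andP[tu _]|u /andP[tu utau]].
  - exact: t_tau.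
  - exact: V_dV (Tle u tu).
  apply: dV_le_c (Tle u (ltW tu)) _.
  have := y_lip t u Tt (ltW tu).
  have : M * (u - t) <= M * tau by rewrite ler_wpM2l // lerBlDl ltW.
  lra.
have : inf E <= V (t + tau) by apply: ge_inf => //; exists (t + tau); first exact: Tle.
have := is_derive_nonincr V_dV dV_le0 TT' T't.
rewrite addrAC subrr add0r in drop; lra.
Unshelve. all: end_near.
Qed.

Lemma enorm_le (R : realType) n (u : 'cV[R]_n) (e : R) :
  0 <= e -> (forall i, `|u i 0| <= e) -> enorm u <= Num.sqrt n%:R * e.
Proof.
move=> e_ge0 u_le; rewrite /enorm -[e in X in _ <= X]ger0_norm // -sqrtr_sqr.
rewrite -sqrtrM ?ler0n // ler_sqrt ?mulr_ge0 ?sqr_ge0 ?ler0n //.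
rewrite mulr_natl -[n in _ *+ n]card_ord -sumr_const; apply: ler_sum => i _.
by rewrite -real_normK ?num_real // lerXn2r ?nnegrE ?normr_ge0.
Qed.

Lemma dist_set_ge0 (R : realType) n (v : 'cV[R]_n) (S : set 'cV[R]_n) :
  S !=set0 -> 0 <= dist_set v S.
Proof.
move=> [w Sw]; apply: lb_le_inf; first by exists (enorm (v - w)), w.
by move=> _ [w' _ <-]; exact: sqrtr_ge0.
Qed.

Lemma dist_Sv_le (R : realType) n (vlo vhi : 'I_n -> R) (v : 'cV[R]_n) (e : R) :
  (forall i, vlo i <= vhi i) -> 0 <= e ->
  (forall i, vlo i - e <= v i 0 <= vhi i + e) ->
  dist_set v (Sv vlo vhi) <= Num.sqrt n%:R * e.
Proof.
move=> lo_hi e_ge0 v_near.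
pose w : 'cV[R]_n := \col_i Num.min (Num.max (v i 0) (vlo i)) (vhi i).
have w_in : Sv vlo vhi w.
  by move=> i; rewrite mxE le_min ge_min le_max !lexx lo_hi !orbT.
apply: le_trans (enorm_le (u := v - w) e_ge0 _).
  apply: ge_inf; last by exists w.
  by exists 0 => _ [w' _ <-]; exact: sqrtr_ge0.
move=> i; rewrite !mxE maxEle minEle; have := v_near i; have := lo_hi i.
by case: ifP; case: ifP; rewrite ler_norml; lra.
Qed.

Lemma is_derive_mulmx (R : realType) n (M : 'M[R]_n) (w : R -> 'cV[R]_n)
    (dw : 'cV[R]_n) (t : R) i :
  (forall j, is_derive t 1 (fun s => w s j 0) (dw j 0)) ->
  is_derive t 1 (fun s => (M *m w s) i 0) ((M *m dw) i 0).
Proof.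
move=> w_dw; have -> : (fun s => (M *m w s) i 0) = \sum_j (fun s => M i j * w s j 0).
  by apply/funext => s; rewrite mxE fct_sumE.
by rewrite mxE; apply: is_derive_sum => j; exact: is_deriveZ.
Qed.

Lemma is_derive_qform (R : realType) n (M : 'M[R]_n) (w : R -> 'cV[R]_n)
    (dw : 'cV[R]_n) (t : R) :
  M^T = M -> (forall j, is_derive t 1 (fun s => w s j 0) (dw j 0)) ->
  is_derive t 1 (fun s => qform M (w s)) (2 * (dw^T *m M *m w t) 0 0).
Proof.
move=> Msym w_dw.
have -> : (fun s => qform M (w s)) =
    \sum_i ((fun s => w s i 0) * (fun s => (M *m w s) i 0)).
  by apply/funext => s; rewrite /qform -mulmxA dot_colE fct_sumE.
apply: is_derive_eq.
  by apply: is_derive_sum => i; apply: is_deriveM (w_dw i) _; exact: is_derive_mulmx.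
rewrite big_split /=.
have -> : \sum_i w t i 0 *: (M *m dw) i 0 = (dw^T *m M *m w t) 0 0.
  by rewrite bilinear_sym // -mulmxA dot_colE.
have -> : \sum_i (M *m w t) i 0 *: dw i 0 = (dw^T *m M *m w t) 0 0.
  by rewrite -mulmxA dot_colE; apply: eq_bigr => i _; rewrite mulrC.
by rewrite mulr_natl mulr2n.
Qed.

Section ClosedLoop.
Variables (R : realType) (n : nat) (X : 'M[R]_n) (vlo vhi : 'I_n -> R)
  (g : 'I_n -> R -> R) (venv : 'cV[R]_n) (q : R -> 'cV[R]_n).
Hypothesis X_sym : X^T = X.
Hypothesis X_pos : forall w, w != 0 -> 0 < qform X w.
Hypothesis vlo_le_vhi : forall i, vlo i <= vhi i.
Hypothesis g_band : forall i v, vlo i <= v <= vhi i -> g i v = 0.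
Hypothesis g_decr_lo : forall i a b, a < b -> b <= vlo i -> g i b < g i a.
Hypothesis g_decr_hi : forall i a b, vhi i <= a -> a < b -> g i b < g i a.

Let v t := X *m q t + venv.
Let gv t : 'cV[R]_n := \col_j g j (v t j 0).

Hypothesis q_deriv :
  forall i (t : R), 0 < t -> is_derive t 1 (fun s => q s i 0) (g i (v t i 0)).

Let g_nonincr (i : 'I_n) :=
  policy_nonincr (vlo_le_vhi i) (@g_band i) (@g_decr_lo i) (@g_decr_hi i).

Let lo : 'cV[R]_n := \col_i vlo i.
Let qeq := invmx X *m (lo - venv).
Let V t := qform X (q t - qeq).
Let power t := \sum_i g i (v t i 0) * (v t i 0 - vlo i).

Lemma closed_loop_deviation (t : R) : X *m (q t - qeq) = v t - lo.
Proof.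
rewrite mulmxBr /qeq mulmxA mulmxV ?mul1mx ?pd_unitmx //.
by rewrite /v opprB addrA.
Qed.

Lemma closed_loop_V_ge0 (t : R) : 0 <= V t.
Proof. exact: pd_qform_ge0. Qed.

Lemma closed_loop_deviation_sqr (t : R) (i : 'I_n) :
  (v t i 0 - vlo i) ^+ 2 <= V t * X i i.
Proof.
have := psd_mulmx_sqr_le (q t - qeq) i X_sym (pd_qform_ge0 X_pos).
by rewrite closed_loop_deviation !mxE.
Qed.

Lemma closed_loop_v_deriv (t : R) (i : 'I_n) : 0 < t ->
  is_derive t 1 (fun s => v s i 0) ((X *m gv t) i 0).
Proof.
move=> t_gt0; have -> : (fun s => v s i 0) = (fun s => (X *m q s) i 0) + cst (venv i 0).
  by apply/funext => s; rewrite /v mxE.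
apply: is_derive_eq; last exact: addr0.
apply: is_deriveD.
by apply: is_derive_mulmx => j; rewrite mxE; exact: q_deriv.
Qed.

Lemma closed_loop_V_deriv (t : R) : 0 < t -> is_derive t 1 V (2 * power t).
Proof.
move=> t_gt0; apply: is_derive_eq.
  apply: (is_derive_qform (dw := gv t)) => // j.
  have -> : (fun s => (q s - qeq) j 0) = (fun s => q s j 0) - cst (qeq j 0).
    by apply/funext => s; rewrite !mxE.
  apply: is_derive_eq; first by apply: is_deriveB; exact: q_deriv.
  by rewrite /gv mxE subr0.
rewrite -mulmxA closed_loop_deviation dot_colE /power.
by congr (_ * _); apply: eq_bigr => i _; rewrite !mxE.
Qed.

Lemma closed_loop_power_le (t : R) (i : 'I_n) :
  power t <= g i (v t i 0) * (v t i 0 - vlo i).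
Proof.
rewrite /power (bigD1 i) //= gerDl; apply: sumr_le0 => j _.
exact: policy_mul_le0 (vlo_le_vhi j) (@g_band j) (@g_decr_lo j) (@g_decr_hi j) _.
Qed.

Lemma closed_loop_power_le0 (t : R) : power t <= 0.
Proof.
apply: sumr_le0 => j _.
exact: policy_mul_le0 (vlo_le_vhi j) (@g_band j) (@g_decr_lo j) (@g_decr_hi j) _.
Qed.

Lemma closed_loop_V_nonincr (s t : R) : 0 < s -> s <= t -> V t <= V s.
Proof.
move=> s_gt0; apply: (is_derive_nonincr (T := s)) => [u su|u _|//].
  exact/closed_loop_V_deriv/(lt_le_trans s_gt0).
by rewrite pmulr_rle0 // closed_loop_power_le0.
Qed.

(* q' is only known on t > 0, so these bounds use V 1 and hold for t >= 1. *)
Let vB j := Num.sqrt (V 1 * X j j).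
Let gB j := `|g j (vlo j - vB j)| + `|g j (vlo j + vB j)|.
Let dvB i := \sum_j `|X i j| * gB j.

Lemma closed_loop_v_bound (t : R) j : 1 <= t -> `|v t j 0 - vlo j| <= vB j.
Proof.
move=> t_ge1; have Xjj_ge0 : 0 <= X j j by rewrite -qform_delta pd_qform_ge0.
rewrite -sqrtr_sqr ler_sqrt ?mulr_ge0 ?closed_loop_V_ge0 //.
apply: le_trans (closed_loop_deviation_sqr t j) _.
by rewrite ler_wpM2r // closed_loop_V_nonincr.
Qed.

Lemma closed_loop_g_bound (t : R) j : 1 <= t -> `|g j (v t j 0)| <= gB j.
Proof.
move=> /(closed_loop_v_bound j); rewrite /gB ler_distl.
exact: (policy_norm_le (vlo_le_vhi j) (@g_band j) (@g_decr_lo j) (@g_decr_hi j)).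
Qed.

Lemma closed_loop_v_lipschitz (s t : R) i :
  1 <= s -> s <= t -> `|v t i 0 - v s i 0| <= dvB i * (t - s).
Proof.
move=> s_ge1 st.
apply: (is_derive_norm_diff_le (f := fun u => v u i 0)
  (df := fun u => (X *m gv u) i 0)) st _ _ => u.
  case/andP => su _; apply: closed_loop_v_deriv.
  exact: lt_le_trans ltr01 (le_trans s_ge1 su).
case/andP => /ltW su _; rewrite mxE.
apply: le_trans (ler_norm_sum _ _ _) _; apply: ler_sum => j _.
rewrite normrM ler_wpM2l // mxE closed_loop_g_bound //.
exact: le_trans s_ge1 su.
Qed.

Lemma closed_loop_dvB_ge0 i : 0 <= dvB i.
Proof. by apply: sumr_ge0 => j _; rewrite mulr_ge0 ?addr_ge0. Qed.

Lemma closed_loop_dissipation (y : R -> R) (M b c e : R) :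
  (forall t, 1 <= t -> y t <= b -> power t <= - c) ->
  (forall s t, 1 <= s -> s <= t -> y t - y s <= M * (t - s)) ->
  0 <= M -> 0 < c -> 0 < e ->
  \forall t \near +oo, b - e < y t.
Proof.
move=> power_le y_lip M_ge0 c_gt0 e_gt0.
apply: (dissipation_eventually_gt (V := V) (dV := fun t => 2 * power t)
  (T := 1) (c := 2 * c)) => [t t_ge1|t _|t _|t t_ge1 /(power_le _ t_ge1)||||].
- exact/closed_loop_V_deriv/(lt_le_trans ltr01 t_ge1).
- exact: closed_loop_V_ge0.
- by rewrite pmulr_rle0 // closed_loop_power_le0.
- by move=> ?; lra.
- exact: y_lip.
- exact: M_ge0.
- by rewrite mulr_gt0.
- exact: e_gt0.
Qed.

Lemma closed_loop_v_eventually_gt i (e : R) : 0 < e ->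
  \forall t \near +oo, vlo i - e < v t i 0.
Proof.
move=> e_gt0; pose c := g i (vlo i - e / 2).
have c_gt0 : 0 < c.
  by apply: (policy_gt0 (vlo_le_vhi i) (@g_band i) (@g_decr_lo i)); lra.
apply: (@filterS _ _ _ (fun t => vlo i - e / 2 - e / 2 < v t i 0)).
  by move=> t; lra.
apply: (closed_loop_dissipation (M := dvB i) (c := c * (e / 2)))
  => [t _ vt_low|s t s_ge1 st|||].
- have := closed_loop_power_le t i; have := g_nonincr i vt_low; rewrite -/c.
  by move=> c_le power_le; nra.
- by have := closed_loop_v_lipschitz i s_ge1 st; rewrite ler_norml => /andP[_ ->].
- exact: closed_loop_dvB_ge0.
- by rewrite mulr_gt0 ?divr_gt0.
- exact: divr_gt0.
Qed.

Lemma closed_loop_v_eventually_lt i (e : R) : 0 < e ->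
  \forall t \near +oo, v t i 0 < vhi i + e.
Proof.
move=> e_gt0; pose c := - g i (vhi i + e / 2).
have c_gt0 : 0 < c.
  rewrite oppr_gt0.
  by apply: (policy_lt0 (vlo_le_vhi i) (@g_band i) (@g_decr_hi i)); lra.
apply: (@filterS _ _ _ (fun t => - (vhi i + e / 2) - e / 2 < - v t i 0)).
  by move=> t; lra.
apply: (closed_loop_dissipation (M := dvB i) (c := c * (e / 2)))
  => [t _ vt_high|s t s_ge1 st|||].
- have v_high : vhi i + e / 2 <= v t i 0 by lra.
  have := closed_loop_power_le t i; have := g_nonincr i v_high.
  by have := vlo_le_vhi i; rewrite -[g i (vhi i + e / 2)]opprK -/c; nra.
- have := closed_loop_v_lipschitz i s_ge1 st; rewrite ler_norml => /andP[+ _].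
  by rewrite opprK addrC; lra.
- exact: closed_loop_dvB_ge0.
- by rewrite mulr_gt0 ?divr_gt0.
- exact: divr_gt0.
Qed.

Lemma closed_loop_voltage_stable :
  dist_set (v t) (Sv vlo vhi) @[t --> +oo] --> 0.
Proof.
apply/cvgrPdist_le => eps eps_gt0.
have sqrtn_ge0 : 0 <= Num.sqrt n%:R :> R by exact: sqrtr_ge0.
pose e := eps / (Num.sqrt n%:R + 1).
have e_gt0 : 0 < e by rewrite divr_gt0 // ltr_wpDl.
have : \forall t \near +oo, forall i, vlo i - e <= v t i 0 <= vhi i + e.
  apply: filter_forall => i.
  apply: filterS2 (closed_loop_v_eventually_gt i e_gt0)
    (closed_loop_v_eventually_lt i e_gt0) => t lo_v v_hi.
  by rewrite !ltW.
apply: filterS => t v_band.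
rewrite sub0r normrN ger0_norm; last first.
  by apply: dist_set_ge0; exists lo => i; rewrite mxE lexx vlo_le_vhi.
apply: le_trans (dist_Sv_le vlo_le_vhi (ltW e_gt0) v_band) _.
rewrite /e mulrA ler_pdivrMr ?ltr_wpDl //; nra.
Qed.

End ClosedLoop.

Theorem theorem1 (R : realType) (n : nat)
  (par : 'I_n.+1 -> 'I_n.+1) (x : 'I_n.+1 -> R)
  (vlo vhi : 'I_n -> R) (g : 'I_n -> R -> R) :
  is_rooted_tree par ->
  (forall k : 'I_n.+1, k != ord0 -> 0 < x k) ->
  (forall i, vlo i <= vhi i) ->
  (forall i, (forall v : R, derivable (g i) v 1) /\ continuous (g i)^`()) ->
  (forall i (v : R), vlo i <= v <= vhi i -> g i v = 0) ->
  (forall i (a b : R), a < b -> b <= vlo i -> g i b < g i a) ->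
  (forall i (a b : R), vhi i <= a -> a < b -> g i b < g i a) ->
  (forall i, (fun v => `|g i v|) w @[w --> +oo] --> +oo) ->
  forall (venv : 'cV[R]_n) (q : R -> 'cV[R]_n),
    (forall i, (fun s => q s i 0) t @[t --> 0^'+] --> q 0 i 0) ->
    (forall i (t : R), 0 < t ->
       is_derive t 1 (fun s => q s i 0)
                 (g i ((Xmat par x *m q t + venv) i 0))) ->
    dist_set (Xmat par x *m q t + venv) (Sv vlo vhi) @[t --> +oo] --> 0.
Proof.
move=> par_tree x_pos lo_hi _ g_band g_decr_lo g_decr_hi _ venv q _ q_deriv.
apply: closed_loop_voltage_stable => //; first exact: Xmat_sym.
by move=> w; exact: Xmat_pos.
Qed.
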